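(* Let $d\ge1$ and let $f:\mathbb{R}^d\setminus\{0\}\to\mathbb{R}$ be differentiable and scale-invariant ($f(c\mathbf{w})=f(\mathbf{w})$ for all $\mathbf{w}\ne0$, $c>0$). Fix $\eta>0$, $\beta\in[0,1)$ and $\mathbf{w}_0\neq 0$. Let $(\mathbf{w}^{\mathrm{GD}}_t)_{t\ge0}$ be the vanilla gradient descent iterates $\mathbf{w}^{\mathrm{GD}}_0=\mathbf{w}_0$, $\mathbf{w}^{\mathrm{GD}}_{t+1}=\mathbf{w}^{\mathrm{GD}}_t-\eta\nabla f(\mathbf{w}^{\mathrm{GD}}_t)$, and let $(\mathbf{w}^{\mathrm{GDM}}_t)_{t\ge0}$ be the momentum gradient descent iterates $\mathbf{w}^{\mathrm{GDM}}_0=\mathbf{w}_0$, $\mathbf{p}_{-1}=0$, $\mathbf{p}_t=\beta\mathbf{p}_{t-1}+\nabla f(\mathbf{w}^{\mathrm{GDM}}_t)$, $\mathbf{w}^{\mathrm{GDM}}_{t+1}=\mathbf{w}^{\mathrm{GDM}}_t-\eta\mathbf{p}_t$ (all iterates assumed nonzero). Assume that the update norms of the two methods coincide, i.e. $\|\nabla f(\mathbf{w}^{\mathrm{GD}}_t)\|_2=\|\mathbf{p}_t\|_2$ for every $t\ge0$, and that $0<\sum_{t\ge0}\|\mathbf{p}_t\|_2^2<\infty$. Then $$\frac{\|\mathbf{w}_t^{\mathrm{GDM}}\|_2^2-\|\mathbf{w}_0\|_2^2}{\|\mathbf{w}_t^{\mathrm{GD}}\|_2^2-\|\mathbf{w}_0\|_2^2}\longrightarrow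 1+\frac{2\beta}{1-\beta}\quad\text{as } t\to\infty.$$
   Context: For scale-invariant differentiable $f$, $\mathbf{w}\cdot\nabla f(\mathbf{w})=0$, so vanilla gradient descent satisfies $\|\mathbf{w}^{\mathrm{GD}}_{t+1}\|_2^2=\|\mathbf{w}^{\mathrm{GD}}_t\|_2^2+\eta^2\|\nabla f(\mathbf{w}^{\mathrm{GD}}_t)\|_2^2$. The ratio is considered for $t$ large enough that the denominator is positive. *)

From HB Require Import structures.
From mathcomp Require Import all_boot all_order all_algebra.
From mathcomp Require Import all_classical all_reals all_analysis.
Set Implicit Arguments. Unset Strict Implicit. Unset Printing Implicit Defensive.
Import Order.TTheory GRing.Theory Num.Theory.
Import numFieldNormedType.Exports.
Local Open Scope ring_scope.

Definition sqnorm {R : realType} {d : nat} (v : 'rV[R]_d) : R :=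
  \sum_(i < d) v 0 i ^+ 2.

Definition norm2 {R : realType} {d : nat} (v : 'rV[R]_d) : R :=
  Num.sqrt (sqnorm v).

Definition grad {R : realType} {d : nat} (f : 'rV[R]_d -> R) (w : 'rV[R]_d)
  : 'rV[R]_d :=
  \row_(i < d) ('D_(delta_mx 0 i) f w).

From HB Require Import structures.
From mathcomp Require Import all_boot all_order all_algebra.
From mathcomp Require Import all_classical all_reals all_analysis.
From mathcomp Require Import ring lra.
Import Order.TTheory GRing.Theory Num.Theory.
Import numFieldNormedType.Exports.
Local Open Scope classical_set_scope.
Local Open Scope ring_scope.

(* Scale invariance gives Euler's identity <w, grad f w> = 0, so a step
   w - eta v changes |w|^2 by eta^2 |v|^2 - 2 eta <w, v>.  For gradient descent
   the cross term vanishes and, the update norms being equal,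
   |wGD_t|^2 - |w_0|^2 = eta^2 S_t with S_t = sum_(s<t) |p_s|^2.  For momentum,
   Euler's identity and p_t = beta p_(t-1) + grad f (wGDM_t) give
   <w_t, p_t> = beta (<w_(t-1), p_(t-1)> - eta |p_(t-1)|^2), i.e.
   <w_t, p_t> = -eta C_t for the discounted sum C below, hence
   |wGDM_t|^2 - |w_0|^2 = eta^2 (S_t + 2 D_t) with D_t = sum_(s<t) C_s.
   Summing the recursion of C gives (1 - beta) D_t = beta S_t - C_t; as D is
   bounded, C_t -> 0 and D_t / S_t -> beta / (1 - beta). *)

Definition dot {R : realType} {d : nat} (u v : 'rV[R]_d) : R :=
  \sum_(i < d) u 0 i * v 0 i.

Section dot_product.
Context {R : realType} {d : nat}.
Implicit Types (u v w : 'rV[R]_d) (a : R).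

Lemma dotvv u : dot u u = sqnorm u.
Proof. by apply: eq_bigr => i _; rewrite expr2. Qed.

Lemma dotC u v : dot u v = dot v u.
Proof. by apply: eq_bigr => i _; rewrite mulrC. Qed.

Lemma dotDr u v w : dot u (v + w) = dot u v + dot u w.
Proof. by rewrite /dot -big_split; apply: eq_bigr => i _; rewrite mxE mulrDr. Qed.

Lemma dotNr u v : dot u (- v) = - dot u v.
Proof. by rewrite /dot -sumrN; apply: eq_bigr => i _; rewrite mxE mulrN. Qed.

Lemma dotZr u v a : dot u (a *: v) = a * dot u v.
Proof. by rewrite /dot mulr_sumr; apply: eq_bigr => i _; rewrite mxE mulrCA. Qed.

Lemma dotBl u v w : dot (u - v) w = dot u w - dot v w.
Proof. by rewrite dotC dotDr dotNr !(dotC w). Qed.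

Lemma dotZl u v a : dot (a *: u) v = a * dot u v.
Proof. by rewrite dotC dotZr dotC. Qed.

Lemma sqnormB u v : sqnorm (u - v) = sqnorm u - 2 * dot u v + sqnorm v.
Proof. by rewrite -!dotvv dotBl !dotDr !dotNr (dotC v u); ring. Qed.

Lemma sqnormZ u a : sqnorm (a *: u) = a ^+ 2 * sqnorm u.
Proof. by rewrite -!dotvv dotZl dotZr mulrA -expr2. Qed.

Lemma sqnorm_ge0 u : 0 <= sqnorm u.
Proof. by apply: sumr_ge0 => i _; rewrite sqr_ge0. Qed.

Lemma norm2_sqnorm u v : norm2 u = norm2 v -> sqnorm u = sqnorm v.
Proof. by move/eqP; rewrite eqr_sqrt ?sqnorm_ge0 // => /eqP. Qed.

End dot_product.

Section scale_invariance.
Context {R : realType} {d : nat}.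
Variables (f : 'rV[R]_d -> R) (w : 'rV[R]_d).

Lemma derive_self_eq0 :
  (forall c : R, 0 < c -> f (c *: w) = f w) -> 'D_w f w = 0.
Proof.
move=> f_ray; rewrite /derive; apply: norm_lim_near_cst; near=> h.
have h_gtN1 : -1 < h.
  have : `|h| < 1 by near: h; exact: dnbhs0_lt.
  by rewrite ltr_norml => /andP[].
by rewrite /= -{2}(scale1r w) -scalerDl f_ray ?subrr ?scaler0 //; lra.
Unshelve. all: by end_near.
Qed.

Lemma dot_grad : differentiable f w -> dot w (grad f w) = 'D_w f w.
Proof.
move=> df; have := linear_sum ('d f w) (index_enum 'I_d) xpredT (fun i => w 0 i *: delta_mx 0 i).
rewrite -row_sum_delta deriveE // => ->.
by apply: eq_bigr => i _; rewrite mxE deriveE // linearZ.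
Qed.

Lemma scale_invariant_dot_grad : differentiable f w ->
  (forall c : R, 0 < c -> f (c *: w) = f w) -> dot w (grad f w) = 0.
Proof. by move=> df f_ray; rewrite dot_grad // derive_self_eq0. Qed.

End scale_invariance.

Section discounted_sum.
Context {R : realType}.
Variables (beta : R) (q : R ^nat).
Hypotheses (beta_ge0 : 0 <= beta) (beta_lt1 : beta < 1).
Hypothesis q_ge0 : forall n, 0 <= q n.

(* discounted_sum n = \sum_(k < n) beta ^+ (n - k) * q k *)
Fixpoint discounted_sum (n : nat) : R :=
  if n is m.+1 then beta * (discounted_sum m + q m) else 0.

Lemma discounted_sum_ge0 n : 0 <= discounted_sum n.
Proof. by elim: n => //= n IH; rewrite mulr_ge0 ?addr_ge0. Qed.

Lemma series_discounted_sum n :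
  (1 - beta) * series discounted_sum n = beta * series q n - discounted_sum n.
Proof.
elim: n => [|n IH]; first by rewrite /series /= !big_geq // !mulr0 subr0.
by rewrite !seriesSr /=; move: IH; lra.
Qed.

Lemma cvg_series_discounted_sum : cvgn (series q) ->
  series discounted_sum @ \oo --> beta * limn (series q) / (1 - beta).
Proof.
move=> q_cvg; set L := limn (series q).
have beta1_gt0 : 0 < 1 - beta by rewrite subr_gt0.
have series_discounted_sumE n :
    series discounted_sum n = (beta * series q n - discounted_sum n) / (1 - beta).
  by rewrite -series_discounted_sum mulrAC divff ?mul1r // gt_eqF.
have series_q_le n : series q n <= L.
  apply: nondecreasing_cvgn_le => //; apply/nondecreasing_seqP => m.
  by rewrite seriesSr lerDl.
have D_cvg : cvgn (series discounted_sum).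
  apply: nondecreasing_is_cvgn.
    by apply/nondecreasing_seqP => m; rewrite seriesSr lerDl discounted_sum_ge0.
  exists (beta * L / (1 - beta)) => _ [n _ <-].
  rewrite series_discounted_sumE ler_pM2r ?invr_gt0 //.
  rewrite lerBlDr -[X in X <= _]addr0.
  by apply: lerD; [exact: ler_wpM2l | exact: discounted_sum_ge0].
rewrite -[beta * L]subr0 (funext series_discounted_sumE); apply: cvgM; last exact: cvg_cst.
apply: cvgB; last exact: cvg_series_cvg_0.
by apply: cvgM; [exact: cvg_cst | exact: q_cvg].
Qed.

Lemma cvg_discounted_ratio : cvgn (series q) -> 0 < limn (series q) ->
  (fun n => (series q n + 2 * series discounted_sum n) / series q n)
    @ \oo --> 1 + 2 * beta / (1 - beta).
Proof.
move=> q_cvg L_gt0; set L := limn (series q).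
have -> : 1 + 2 * beta / (1 - beta) = (L + 2 * (beta * L / (1 - beta))) / L.
  by field; rewrite gt_eqF //= subr_eq0 gt_eqF.
apply: (cvgM (f := fun n => series q n + 2 * series discounted_sum n)
              (g := fun n => (series q n)^-1)).
  apply: cvgD; first exact: q_cvg.
  by apply: cvgM; [exact: cvg_cst | exact: cvg_series_discounted_sum].
by apply: cvgV; [rewrite gt_eqF | exact: q_cvg].
Qed.

End discounted_sum.

Section orthogonal_updates.
Context {R : realType} {d : nat}.
Context {eta : R} {w g : nat -> 'rV[R]_d}.
Hypothesis w_orth_g : forall t, dot (w t) (g t) = 0.

Lemma sqnorm_step t (v : 'rV[R]_d) :
  sqnorm (w t - eta *: v) = sqnorm (w t) - 2 * eta * dot (w t) v + eta ^+ 2 * sqnorm v.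
Proof. by rewrite sqnormB dotZr sqnormZ mulrA. Qed.

Lemma descent_sqnorm : (forall t, w t.+1 = w t - eta *: g t) ->
  forall t, sqnorm (w t) - sqnorm (w 0%N) = eta ^+ 2 * series (fun s => sqnorm (g s)) t.
Proof.
move=> wS; elim=> [|t IH]; first by rewrite subrr /series /= big_geq // mulr0.
by rewrite wS sqnorm_step w_orth_g seriesSr; move: IH; lra.
Qed.

Context {beta : R} {p : nat -> 'rV[R]_d}.
Hypotheses (p0 : p 0%N = g 0%N) (pS : forall t, p t.+1 = beta *: p t + g t.+1).
Hypothesis wS : forall t, w t.+1 = w t - eta *: p t.

Let q t := sqnorm (p t).

Lemma momentum_dot t : dot (w t) (p t) = - eta * discounted_sum beta q t.
Proof.
elim: t => [|t IH]; first by rewrite p0 w_orth_g mulr0.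
by rewrite pS dotDr w_orth_g wS dotZr dotBl dotZl IH dotvv /=; rewrite /q; ring.
Qed.

Lemma momentum_sqnorm t : sqnorm (w t) - sqnorm (w 0%N)
  = eta ^+ 2 * (series q t + 2 * series (discounted_sum beta q) t).
Proof.
elim: t => [|t IH]; first by rewrite subrr /series /= !big_geq //; ring.
by rewrite wS sqnorm_step momentum_dot !seriesSr; move: IH; rewrite /q; lra.
Qed.

End orthogonal_updates.

Theorem mainTheorem2 (R : realType) (d : nat) (f : 'rV[R]_d -> R)
    (eta beta : R) (w0 : 'rV[R]_d)
    (wGD wGDM p : nat -> 'rV[R]_d) :
  (0 < d)%N ->
  (forall w : 'rV[R]_d, w != 0 -> differentiable f w) ->
  (forall (w : 'rV[R]_d) (c : R), w != 0 -> 0 < c -> f (c *: w) = f w) ->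
  0 < eta -> 0 <= beta -> beta < 1 ->
  w0 != 0 ->
  wGD 0%N = w0 ->
  (forall t : nat, wGD t.+1 = wGD t - eta *: grad f (wGD t)) ->
  wGDM 0%N = w0 ->
  p 0%N = grad f (wGDM 0%N) ->
  (forall t : nat, p t.+1 = beta *: p t + grad f (wGDM t.+1)) ->
  (forall t : nat, wGDM t.+1 = wGDM t - eta *: p t) ->
  (forall t : nat, wGD t != 0) ->
  (forall t : nat, wGDM t != 0) ->
  (forall t : nat, norm2 (grad f (wGD t)) = norm2 (p t)) ->
  cvgn (series (fun t => sqnorm (p t))) ->
  0 < limn (series (fun t => sqnorm (p t))) ->
  (fun t => (sqnorm (wGDM t) - sqnorm w0) / (sqnorm (wGD t) - sqnorm w0))
    @ \oo --> 1 + 2 * beta / (1 - beta).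
Proof.
move=> _ f_diff f_inv eta_gt0 beta_ge0 beta_lt1 _ GD0 GDS GDM0 p0 pS GDMS
  GD_neq0 GDM_neq0 norm_eq q_cvg L_gt0.
have orth w : w != 0 -> dot w (grad f w) = 0.
  by move=> w_neq0; apply: scale_invariant_dot_grad => [|c]; [exact: f_diff | exact: f_inv].
have GD_sqnorm := descent_sqnorm (fun t => orth _ (GD_neq0 t)) GDS.
have GDM_sqnorm := momentum_sqnorm (fun t => orth _ (GDM_neq0 t)) p0 pS GDMS.
have GD_series : series (fun t => sqnorm (grad f (wGD t))) = series (fun t => sqnorm (p t)).
  by apply/funext => t; apply: eq_bigr => s _; exact: norm2_sqnorm.
set q := fun t => sqnorm (p t).
suff -> : (fun t => (sqnorm (wGDM t) - sqnorm w0) / (sqnorm (wGD t) - sqnorm w0))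
    = (fun t => (series q t + 2 * series (discounted_sum beta q) t) / series q t).
  exact: cvg_discounted_ratio beta_ge0 beta_lt1 (fun t => sqnorm_ge0 (p t)) q_cvg L_gt0.
apply/funext => t; rewrite -{1}GDM0 -GD0 GDM_sqnorm GD_sqnorm GD_series.
have eta2_neq0 : eta ^+ 2 != 0 by rewrite expf_neq0 // gt_eqF.
by rewrite invfM mulrACA mulfV // mul1r.
Qed.
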